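(* Let $n\ge2$, $d\ge1$, $r\ge3$ with $n\ge d$ and $dr\equiv0\pmod n$. For every vertex $(a,x)$ of $Q_n(d,r)$, the distance in $Q_n(d,r)$ between $(0_n,0)$ and $(a,x)$ equals $\|a\|+l(a,x)$.
   Context: $\mathbb{Z}_2^n=\{0,1\}^n$ with coordinatewise addition mod 2; $e_i$ is the $i$-th standard basis vector, subscripts read modulo $n$; $\|a\|$ is the Hamming weight of $a$. The recursive cube of rings $Q_n(d,r)$ is the simple graph on $\mathbb{Z}_2^n\times\mathbb{Z}_r$ in which $(a,x)$ is adjacent to $(a+e_{i+dx},x)$ for $1\le i\le d$ and to $(a,x\pm1)$. For $x\in\mathbb{Z}_r$, $D(x)=\{i+dx\bmod n:1\le i\le d\}\subseteq\{1,\dots,n\}$. Elements of $\mathbb{Z}_r$ are represented in $\{0,\dots,r-1\}$. With $s=\|a\|$, an $(a,x)$-sequence is a tuple $\hat x=(x_0,x_1,\dots,x_s,x_{s+1})$ of elements of $\mathbb{Z}_r$ with $x_0=0$, $x_{s+1}=x$, such that the support $\{i: a_i=1\}$ can be enumerated as $i_1,\dots,i_s$ with $i_t\in D(x_t)$ for every $1\le t\le s$. Its length is $l(\hat x)=\sum_{t=1}^{s+1}\min\{|x_t-x_{t-1}|,\,r-|x_t-x_{t-1}|\}$, and $l(a,x)=\min_{\hat x} l(\hat x)$ over all $(a,x)$-sequences. *)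

From mathcomp Require Import all_boot.
Set Implicit Arguments. Unset Strict Implicit. Unset Printing Implicit Defensive.

(* Conventions: coordinates 1..n of the paper are the ordinals 'I_n (0-based),
   so paper index k corresponds to ordinal k-1.  Z_r is represented by 'I_r. *)

Definition vertex (n r : nat) := ({ffun 'I_n -> bool} * 'I_r)%type.

Definition hw n (a : {ffun 'I_n -> bool}) : nat := #|[set i | a i]|.

Definition flip n (a : {ffun 'I_n -> bool}) (k : nat) : {ffun 'I_n -> bool} :=
  [ffun i => a i (+) (val i == k %% n)].

(* 0-based D(x): k \in D(x) iff k = (j + d x) mod n for some 0 <= j < d
   (paper: i + dx mod n, 1 <= i <= d, shifted by -1). *)
Definition inD (n d : nat) (x k : nat) : bool :=
  [exists j : 'I_d, k == (j + d * x) %% n].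

Definition qadj (n d r : nat) (u v : vertex n r) : bool :=
  ((u.2 == v.2) && [exists j : 'I_d, v.1 == flip u.1 (j + d * u.2)])
  || ((u.1 == v.1) && ((val v.2 == (u.2 + 1) %% r) || (val u.2 == (v.2 + 1) %% r))).

Definition is_dist (T : eqType) (e : rel T) (u v : T) (k : nat) : Prop :=
  (exists p : seq T, [/\ path e u p, last u p = v & size p = k]) /\
  (forall p : seq T, path e u p -> last u p = v -> k <= size p).

Arguments qadj : clear implicits.

Definition cdist (r x y : nat) : nat :=
  let dd := if x <= y then y - x else x - y in minn dd (r - dd).

(* (a,x)-sequences: xs = (x_0,...,x_{s+1}) *)
Definition is_axseq n d r (a : {ffun 'I_n -> bool}) (x : 'I_r)
    (xs : (hw a).+2.-tuple 'I_r) : bool :=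
  let ys := map val xs in
  [&& nth 0 ys 0 == 0, nth 0 ys (hw a).+1 == val x &
   [exists idx : (hw a).-tuple 'I_n,
      [&& uniq idx, [forall i, (i \in idx) == a i] &
          [forall t : 'I_(hw a), inD n d (nth 0 ys t.+1) (tnth idx t)]]]].

Arguments is_axseq : clear implicits.

Definition seqlen n r (a : {ffun 'I_n -> bool}) (xs : (hw a).+2.-tuple 'I_r) : nat :=
  let ys := map val xs in
  \sum_(t < (hw a).+1) cdist r (nth 0 ys t) (nth 0 ys t.+1).

Arguments seqlen : clear implicits.

(* l(a,x) = minimum over all (a,x)-sequences (the default value is irrelevant
   as (a,x)-sequences always exist under the hypotheses of the theorem). *)
Definition lmin n d r (a : {ffun 'I_n -> bool}) (x : 'I_r) : nat :=
  \big[minn/((hw a).+1 * r)]_(xs : (hw a).+2.-tuple 'I_r | is_axseq n d r a x xs)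
     seqlen n r a xs.

Arguments lmin : clear implicits.

From mathcomp Require Import all_boot zify order.
Import Order.TTheory.

(* A walk from (0,0) to (a,x) toggles every coordinate of supp(a) an odd number
   of times and every other coordinate an even number of times, and a toggle of
   coordinate k at ring position y requires k in D(y).  Reading the walk
   backwards and cancelling toggles of the same coordinate in pairs leaves one
   toggle per coordinate of supp(a), i.e. an (a,x)-sequence; by the triangle
   inequality for the circular distance its length l is at most the number of
   ring moves, so the walk has length at least ||a|| + l(a,x).  Conversely an
   (a,x)-sequence is realised by walking the shorter arc between consecutive
   ring positions and toggling in between.  Since n divides dr, coordinate i lies
   in D(i / d), so (a,x)-sequences exist. *)

Set Implicit Arguments.
Unset Strict Implicit.
Unset Printing Implicit Defensive.

Section CircularDistance.

Variable r : nat.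

Lemma cdistxx a : cdist r a a = 0.
Proof. by rewrite /cdist leqnn subnn min0n. Qed.

Lemma cdistC a b : cdist r a b = cdist r b a.
Proof. by rewrite /cdist; case: (leqP a b); case: (leqP b a) => /= *; lia. Qed.

Lemma cdist_ler a b : cdist r a b <= r.
Proof. by rewrite /cdist; case: (leqP a b) => /= *; lia. Qed.

Lemma cdist_triangle (a b c : 'I_r) : cdist r a c <= cdist r a b + cdist r b c.
Proof.
have := ltn_ord a; have := ltn_ord b; have := ltn_ord c; rewrite /cdist.
by case: (leqP a c); case: (leqP a b); case: (leqP b c) => /= *; lia.
Qed.

Lemma cdist_succ (a : 'I_r) : cdist r a ((a + 1) %% r) <= 1.
Proof.
have lt_ar := ltn_ord a; case: (ltnP (a + 1) r) => [lt_a1r|le_ra1].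
  by rewrite modn_small // /cdist leq_addr /=; lia.
rewrite (_ : a + 1 = r) ?modnn /cdist; last by lia.
by case: (leqP a 0) => /= *; lia.
Qed.

Fixpoint tour (y : 'I_r) (zs : seq 'I_r) (x : 'I_r) {struct zs} : nat :=
  match zs with
  | [::] => cdist r y x
  | z :: zs' => cdist r y z + tour z zs' x
  end.

Lemma tour_triangle (y z : 'I_r) zs x : tour y zs x <= cdist r y z + tour z zs x.
Proof.
case: zs => [|z' zs] /=; first exact: cdist_triangle.
by rewrite addnA leq_add2r cdist_triangle.
Qed.

Lemma tour_subseq y zs' zs x : subseq zs' zs -> tour y zs' x <= tour y zs x.
Proof.
elim: zs zs' y => [|z zs IH] [|z' zs'] y // sub_zs.
  apply: leq_trans (tour_triangle y z [::] x) _.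
  by rewrite /= leq_add2l (IH [::]) ?sub0seq.
move: sub_zs; rewrite [subseq _ _]/=; case: eqP => [<- sub_zs|_ sub_zs].
  by rewrite /= leq_add2l IH.
apply: leq_trans (tour_triangle y z _ x) _.
by rewrite [tour y (z :: zs) x]/= leq_add2l IH.
Qed.

Lemma tour_sum y zs x (ys := map val (y :: rcons zs x)) :
  tour y zs x = \sum_(t < (size zs).+1) cdist r (nth 0 ys t) (nth 0 ys t.+1).
Proof.
rewrite {}/ys; elim: zs y => [|z zs IH] y /=; first by rewrite big_ord_recl big_ord0 addn0.
by rewrite big_ord_recl IH.
Qed.

Lemma val_iter_ordS (y : 'I_r) m : val (iter m (@ordS r) y) = (y + m) %% r.
Proof.
elim: m => [|m IH]; first by rewrite addn0 modn_small.
by rewrite iterS /= IH -addn1 modnDml -addnA addn1.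
Qed.

Lemma ordS_reach (y z : 'I_r) :
  exists2 m, m = cdist r y z & iter m (@ordS r) y = z \/ iter m (@ordS r) z = y.
Proof.
wlog le_yz : y z / y <= z.
  move=> wlog_le; case: (leqP y z) => [/wlog_le //|/ltnW/wlog_le [m ->]].
  by rewrite cdistC => reach; exists (cdist r y z); last by rewrite or_comm.
have lt_zr := ltn_ord z.
have cdist_yz : cdist r y z = minn (z - y) (r - (z - y)) by rewrite /cdist le_yz.
case: (leqP (z - y) (r - (z - y))) => [le_up|lt_down].
  exists (z - y); first by rewrite cdist_yz; lia.
  by left; apply: val_inj; rewrite val_iter_ordS subnKC // modn_small.
exists (r - (z - y)); first by rewrite cdist_yz; lia.
right; apply: val_inj; rewrite val_iter_ordS /=.
by rewrite (_ : z + (r - (z - y)) = y + r) ?modnDr ?modn_small //; lia.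
Qed.

End CircularDistance.

Lemma iter_can (T : Type) (f g : T -> T) m : cancel f g -> cancel (iter m f) (iter m g).
Proof. by move=> fK; elim: m => // m IH x; rewrite iterSr iterS fK IH. Qed.

Lemma flipE n (b : {ffun 'I_n -> bool}) (k i : 'I_n) : flip b k i = b i (+) (i == k).
Proof. by rewrite ffunE modn_small ?val_eqE. Qed.

Lemma flip_modn n (b : {ffun 'I_n -> bool}) m : flip b (m %% n) = flip b m.
Proof. by apply/ffunP => i; rewrite !ffunE modn_mod. Qed.

(* The combinatorial content of an (a,x)-sequence with its endpoints 0 and x
   removed: each coordinate of c appears once, paired with a ring position at
   which it may be toggled. *)
Definition schedule n d r (S : seq ('I_n * 'I_r)) (c : 'I_n -> bool) : Prop :=
  [/\ uniq (map fst S), forall i, (i \in map fst S) = c i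
    & all (fun q : 'I_n * 'I_r => inD n d q.2 q.1) S].

Arguments schedule : clear implicits.

Section Walks.

Variables n d r : nat.
Local Notation adj := (qadj n d r).

Lemma qadj_flip b (y : 'I_r) (k : 'I_n) : inD n d y k -> adj (b, y) (flip b k, y).
Proof.
case/existsP => j /eqP val_k; rewrite /qadj /= eqxx /=.
by apply/orP; left; apply/existsP; exists j; rewrite val_k flip_modn.
Qed.

Lemma qadj_ordS b (y : 'I_r) : adj (b, y) (b, ordS y).
Proof. by apply/orP; right; rewrite /= addn1 !eqxx. Qed.

Lemma qadj_ord_pred b (y : 'I_r) : adj (b, y) (b, ord_pred y).
Proof.
apply/orP; right; rewrite eqxx /=; apply/orP; right.
by rewrite addn1; apply/eqP; rewrite -[in LHS](ord_predK y).
Qed.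

Lemma qadj_cases b b' (y y' : 'I_r) : 0 < n -> adj (b, y) (b', y') ->
  (y' = y /\ exists2 k : 'I_n, inD n d y k & b' = flip b k)
  \/ (b' = b /\ cdist r y y' <= 1).
Proof.
move=> n_gt0; case/orP => /andP [/eqP /= <-].
  case/existsP => j /eqP ->; left; split => //.
  exists (Ordinal (ltn_pmod (j + d * y) n_gt0)); last by rewrite /= flip_modn.
  by apply/existsP; exists j.
case/orP => /eqP val_succ; right; split => //; first by rewrite val_succ cdist_succ.
by rewrite cdistC val_succ cdist_succ.
Qed.

Lemma iter_path b (f : 'I_r -> 'I_r) y m : (forall i, adj (b, i) (b, f i)) ->
  exists p, [/\ path adj (b, y) p, last (b, y) p = (b, iter m f y) & size p = m].
Proof.
move=> f_adj; elim: m => [|m [p [p_path p_last p_size]]]; first by exists [::].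
exists (rcons p (b, iter m.+1 f y)).
by rewrite rcons_path last_rcons size_rcons p_path p_last p_size f_adj.
Qed.

Lemma ring_path b (y z : 'I_r) :
  exists p, [/\ path adj (b, y) p, last (b, y) p = (b, z) & size p = cdist r y z].
Proof.
have [m m_eq [reach | reach]] := ordS_reach y z; rewrite -m_eq.
  by rewrite -reach; apply: iter_path; apply: qadj_ordS.
rewrite -(iter_can m (@ordSK r) z) reach.
by apply: iter_path; apply: qadj_ord_pred.
Qed.

Lemma schedule_path b (y x : 'I_r) S c : schedule n d r S c ->
  exists p, [/\ path adj (b, y) p, last (b, y) p = ([ffun i => b i (+) c i], x)
    & size p = size S + tour y (map snd S) x].
Proof.
case=> S_uniq S_c S_inD.
have -> : [ffun i => b i (+) c i] = [ffun i => b i (+) (i \in map fst S)].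
  by apply/ffunP => i; rewrite !ffunE S_c.
elim: S b y S_uniq S_inD {S_c} => [|[k z] S IH] b y /=.
  have [p [p_path p_last p_size]] := ring_path b y x.
  exists p; split => //; rewrite p_last; congr pair.
  by apply/ffunP => i; rewrite ffunE addbF.
case/andP=> k_notin S_uniq /andP [k_inD S_inD].
have [p1 [p1_path p1_last p1_size]] := ring_path b y z.
have [p2 [p2_path p2_last p2_size]] := IH (flip b k) z S_uniq S_inD.
exists (p1 ++ (flip b k, z) :: p2); split.
- by rewrite cat_path p1_path p1_last /= qadj_flip.
- rewrite last_cat p1_last /= p2_last; congr pair; apply/ffunP => i.
  rewrite [LHS]ffunE flipE [RHS]ffunE in_cons.
  case: eqVneq => [->|_] /=; last by rewrite addbF.
  by rewrite (negbTE k_notin) addbF.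
- by rewrite size_cat /= p1_size p2_size; lia.
Qed.

Hypothesis n_gt0 : 0 < n.

Lemma path_schedule a (x : 'I_r) p b y : path adj (b, y) p -> last (b, y) p = (a, x) ->
  exists2 S, schedule n d r S [ffun i => a i (+) b i]
           & size S + tour y (map snd S) x <= size p.
Proof.
elim: p b y => [|[b' y'] p IH] b y /=.
  move=> _ [-> ->]; exists [::]; last by rewrite /= cdistxx.
  by split => // i; rewrite ffunE addbb.
case/andP=> step p_path p_last.
have [S [S_uniq S_c S_inD] S_size] := IH b' y' p_path p_last.
case: (qadj_cases n_gt0 step) => [[y'_eq [k k_inD b'_eq]] | [b'_eq le_yy']].
  subst y' b'.
  have S_ck i : (i \in map fst S) = a i (+) b i (+) (i == k).
    by rewrite S_c ffunE flipE addbA.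
  case k_in: (k \in map fst S).
    exists [seq q <- S | q.1 != k].
      have fst_filter : map fst [seq q <- S | q.1 != k] = [seq i <- map fst S | i != k].
        by rewrite filter_map.
      split; first by rewrite fst_filter filter_uniq.
        move=> i; rewrite fst_filter mem_filter S_ck ffunE.
        case: eqVneq => [->|_] /=; last by rewrite addbF.
        by move: (S_ck k); rewrite k_in eqxx; case: (a k (+) b k).
      by apply/allP => q; rewrite mem_filter => /andP [_ /(allP S_inD)].
    apply: leq_trans (leqnSn _); apply: leq_trans S_size; apply: leq_add.
      by rewrite size_filter count_size.
    by apply: tour_subseq; rewrite map_subseq ?filter_subseq.
  exists ((k, y) :: S); last by rewrite /= cdistxx add0n addSn ltnS.
  split; [by rewrite /= k_in S_uniq | move=> i | by rewrite /= k_inD S_inD].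
  rewrite /= in_cons S_ck ffunE; case: eqVneq => [->|_] /=; last by rewrite addbF.
  by move: (S_ck k); rewrite k_in eqxx; case: (a k (+) b k).
subst b'; exists S => //.
apply: leq_trans (_ : size S + (cdist r y y' + tour y' (map snd S) x) <= _).
  by rewrite leq_add2l tour_triangle.
lia.
Qed.

End Walks.

Section AxSequences.

Variables n d r : nat.
Implicit Types (a : {ffun 'I_n -> bool}) (S : seq ('I_n * 'I_r)).

Lemma schedule_size S a : schedule n d r S a -> size S = hw a.
Proof.
case=> S_uniq S_a _; rewrite -(size_map fst) -(card_uniqP S_uniq) /hw.
by apply: eq_card => i; rewrite inE S_a.
Qed.

Lemma seqlen_tour a (xs : (hw a).+2.-tuple 'I_r) y zs x :
  tval xs = y :: rcons zs x -> seqlen n r a xs = tour y zs x.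
Proof.
move=> xs_eq; have := size_tuple xs; rewrite xs_eq /= size_rcons => -[zs_size].
by rewrite /seqlen xs_eq tour_sum zs_size.
Qed.

Lemma seqlen_le a (xs : (hw a).+2.-tuple 'I_r) : seqlen n r a xs <= (hw a).+1 * r.
Proof.
rewrite -[X in X * r]card_ord -sum_nat_const.
by apply: leq_sum => t _; apply: cdist_ler.
Qed.

Lemma schedule_axseq (x0 x : 'I_r) a S : val x0 = 0 -> schedule n d r S a ->
  exists2 xs, is_axseq n d r a x xs & seqlen n r a xs = tour x0 (map snd S) x.
Proof.
move=> x0_0 S_sched; have S_size := schedule_size S_sched.
case: S_sched => S_uniq S_a S_inD.
have xs_size : size (x0 :: rcons (map snd S) x) == (hw a).+2.
  by rewrite /= size_rcons size_map S_size.
have idx_size : size (map fst S) == hw a by rewrite size_map S_size.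
exists (Tuple xs_size); last exact: seqlen_tour.
rewrite /is_axseq /= x0_0 map_rcons nth_rcons !size_map S_size ltnn !eqxx /=.
apply/existsP; exists (Tuple idx_size); rewrite /= S_uniq /=.
apply/andP; split; first by apply/forallP => i; rewrite S_a.
apply/forallP => t; have t_lt : t < size S by rewrite S_size.
pose q0 := nth (tnth (Tuple idx_size) t, x) S t.
rewrite nth_rcons !size_map t_lt (tnth_nth q0.1) /= -map_comp !(nth_map q0) //.
exact: (all_nthP q0 S_inD).
Qed.

Lemma axseq_schedule (x0 x : 'I_r) a xs : val x0 = 0 -> is_axseq n d r a x xs ->
  exists2 S, schedule n d r S a & tour x0 (map snd S) x = seqlen n r a xs.
Proof.
move=> x0_0; have [y [zs [z xs_eq]]] : exists y zs z, tval xs = y :: rcons zs z.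
  have := size_tuple xs; case: (tval xs) => [|y ys] //.
  by case/lastP: ys => [|zs z] // _; exists y, zs, z.
have := size_tuple xs; rewrite xs_eq /= size_rcons => -[zs_size].
rewrite /is_axseq xs_eq /= map_rcons nth_rcons size_map zs_size ltnn eqxx.
case/and3P=> /eqP y_0 /eqP /val_inj <- /existsP [idx /and3P [idx_uniq idx_a idx_inD]].
have <- : y = x0 by apply: val_inj; rewrite /= y_0 x0_0.
have idx_size : size idx = size zs by rewrite size_tuple zs_size.
have fst_zip : map fst (zip idx zs) = idx by rewrite -/unzip1 unzip1_zip ?idx_size.
have snd_zip : map snd (zip idx zs) = zs by rewrite -/unzip2 unzip2_zip ?idx_size.
exists (zip idx zs); last by rewrite snd_zip (seqlen_tour xs_eq).
split; [by rewrite fst_zip | by move=> i; rewrite fst_zip (eqP (forallP idx_a i)) |].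
apply/allP => -[k w] /(nthP (k, w)) [t]; rewrite size_zip idx_size minnn => t_lt.
rewrite nth_zip // => -[<- <-] /=.
have t_lt_hw : t < hw a by rewrite -zs_size.
have := forallP idx_inD (Ordinal t_lt_hw).
by rewrite (tnth_nth k) nth_rcons size_map t_lt (nth_map w).
Qed.

Lemma lmin_le_tour (x0 x : 'I_r) a S : val x0 = 0 -> schedule n d r S a ->
  lmin n d r a x <= tour x0 (map snd S) x.
Proof.
move=> x0_0 /(schedule_axseq x x0_0) [xs xs_axseq <-].
have := @bigmin_le_cond _ nat _ ((hw a).+1 * r) _ _ (seqlen n r a) xs_axseq.
by rewrite minEnat.
Qed.

Lemma lmin_tour (x0 x : 'I_r) a S0 : val x0 = 0 -> schedule n d r S0 a ->
  exists2 S, schedule n d r S a & lmin n d r a x = tour x0 (map snd S) x.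
Proof.
move=> x0_0 /(schedule_axseq x x0_0) [xs0 xs0_axseq _].
have := @bigmin_eq_arg _ nat _ _ _ _ (seqlen n r a) xs0_axseq (fun xs _ => seqlen_le xs).
rewrite /lmin minEnat; case: arg_minP => // xs xs_axseq _ ->.
by have [S S_sched <-] := axseq_schedule x0_0 xs_axseq; exists S.
Qed.

Lemma schedule_exists a : 0 < d -> n <= d * r -> exists S, schedule n d r S a.
Proof.
move=> d_gt0 le_n_dr.
have ring_lt (i : 'I_n) : i %/ d < r by rewrite ltn_divLR // mulnC (leq_trans _ le_n_dr).
pose S := [seq (i, Ordinal (ring_lt i)) | i <- enum 'I_n & a i].
have fst_S : map fst S = [seq i <- enum 'I_n | a i] by rewrite -map_comp map_id.
exists S; split; rewrite ?fst_S; first by rewrite filter_uniq ?enum_uniq.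
  by move=> i; rewrite mem_filter mem_enum andbT.
rewrite all_map; apply/allP => i _ /=; apply/existsP; exists (Ordinal (ltn_pmod i d_gt0)).
by rewrite /= addnC mulnC -divn_eq modn_small.
Qed.

End AxSequences.

Theorem mainTheorem6 (n d r : nat) :
  2 <= n -> 1 <= d -> 3 <= r -> d <= n -> d * r %% n = 0 ->
  forall (x0 : 'I_r), val x0 = 0 ->
  forall (a : {ffun 'I_n -> bool}) (x : 'I_r),
    is_dist (qadj n d r) ([ffun => false], x0) (a, x) (hw a + lmin n d r a x).
Proof.
move=> n_ge2 d_gt0 r_ge3 _ dvd_n_dr x0 x0_0 a x.
have n_gt0 : 0 < n by lia.
have le_n_dr : n <= d * r by apply: dvdn_leq; [rewrite muln_gt0 d_gt0; lia | exact/eqP].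
have [S0 S0_sched] := schedule_exists a d_gt0 le_n_dr.
split.
  have [S S_sched ->] := lmin_tour x x0_0 S0_sched.
  have [p [p_path p_last p_size]] := schedule_path [ffun => false] x0 x S_sched.
  exists p; split => //; last by rewrite p_size (schedule_size S_sched).
  by rewrite p_last; congr pair; apply/ffunP => i; rewrite !ffunE.
move=> p p_path p_last.
have [S] := path_schedule n_gt0 p_path p_last.
rewrite (_ : [ffun i => a i (+) _] = a); last by apply/ffunP => i; rewrite !ffunE addbF.
move=> S_sched; rewrite -(schedule_size S_sched); apply: leq_trans.
by rewrite leq_add2l lmin_le_tour.
Qed.
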